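(* Let $n\ge2$ and $1\le m\le n-1$ be integers and let $\alpha$ be real with $n-m<\alpha<m(n-m)$. Then for primes $p$ there exists a subset $G\subset G(n,n-m)$ such that $|G|\approx p^{\alpha}$ and for every $\xi\in\mathbb{F}_p^n\setminus\{0\}$, \[ |\{W\in G:\ \xi\in Per(W)\}|\lesssim |G|\,p^{-(n-m)}. \]
   Context: $\mathbb{F}_p$ is the field with $p$ elements and $G(n,k)$ is the set of all $k$-dimensional linear subspaces of $\mathbb{F}_p^n$. For a subspace $W$, $Per(W)=\{x\in\mathbb{F}_p^n:\ x\cdot w=0\ \text{for all } w\in W\}$ with $x\cdot w=\sum_i x_iw_i$. $|J|$ denotes cardinality. $f\lesssim g$ means $f\le Cg$ with $C$ independent of $p$ and $\xi$; $f\approx g$ means $f\lesssim g$ and $g\lesssim f$. *)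

From mathcomp Require Import all_boot all_algebra.
From Stdlib Require Import Reals.
Set Implicit Arguments. Unset Strict Implicit. Unset Printing Implicit Defensive.
Import GRing.Theory.

Local Open Scope ring_scope.

Definition dotv (p n : nat) (x w : 'rV['F_p]_n) : 'F_p :=
  \sum_(i < n) x 0 i * w 0 i.

Definition inPer (p n : nat) (W : {vspace 'rV['F_p]_n}) (xi : 'rV['F_p]_n) : bool :=
  [forall w : 'rV['F_p]_n, (w \in W) ==> (dotv xi w == 0)].

(* G is a (finite, duplicate-free list representing a) subset of G(n,k). *)
Definition subset_Grass (p n k : nat) (G : seq {vspace 'rV['F_p]_n}) : Prop :=
  uniq G /\ all (fun W => \dim W == k)%N G.

Definition count_Per (p n : nat) (G : seq {vspace 'rV['F_p]_n}) (xi : 'rV['F_p]_n) : nat :=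
  count (fun W => inPer W xi) G.

(* Write n = k + m.  The graph W_A = {(u, u A)} of a k x m matrix A is a
   k-dimensional subspace, and (a, b) is perpendicular to W_A iff
   a_i + b . A_i = 0 for every row i; for a nonzero (a, b) this forces b <> 0.
   Choosing the rows A_i independently in a set Phi of F_p^m, the number of graphs
   perpendicular to (a, b) is the product over i of the sizes of the affine
   hyperplane sections {x in Phi | b . x = - a_i}.  So it suffices to find Phi with
   |Phi|^k ~ p^alpha whose hyperplane sections all have size <= m |Phi| / p.
   Writing alpha / k = j + gamma with 1 <= j < m and 0 <= gamma < 1, take
   N = floor (p^gamma) and Phi the image of E x F_p, |E| = p^(j-1) N, under
   (w, s) |-> (s, s^2, ..., s^m) + (0, psi w) for an injection psi of E into
   F_p^(m-1): for fixed w a hyperplane equation becomes a nonzero polynomial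
   equation of degree <= m in s. *)

From mathcomp Require Import all_boot all_algebra zify.
Set Implicit Arguments. Unset Strict Implicit. Unset Printing Implicit Defensive.
Import GRing.Theory.

Lemma card_prod_le_fibers (A B : finType) (P : pred (A * B)) (L : nat) :
  (forall a, #|[pred b | P (a, b)]| <= L) -> #|P| <= #|A| * L.
Proof.
move=> hL; rewrite -sum_nat_const -sum1_card.
rewrite (eq_bigl (fun x => xpredT x.1 && P (x.1, x.2))); last by case.
rewrite -(pair_big_dep xpredT (fun a b => P (a, b)) (fun _ _ => 1)) /=.
by apply: leq_sum => a _; rewrite sum1_card; apply: hL.
Qed.

Section MomentCurve.
Local Open Scope ring_scope.
Variables (F : finFieldType) (n : nat) (E : finType) (psi : E -> 'rV[F]_n).
Hypothesis psi_inj : injective psi.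

Lemma card_root_lt_size (q : {poly F}) :
  q != 0 -> (#|[pred s | root q s]| < size q)%N.
Proof.
move=> q0; rewrite cardE; apply: max_poly_roots q0 _ (enum_uniq _).
by apply/allP => s; rewrite mem_enum.
Qed.

Definition moment_row (s : F) : 'rV[F]_(1 + n) := \row_(l < 1 + n) s ^+ l.+1.

Definition curve_point (d : E * F) : 'rV[F]_(1 + n) :=
  moment_row d.2 + row_mx (0 : 'rV[F]_1) (psi d.1).

Lemma curve_point_inj : injective curve_point.
Proof.
have curve_point_rshift d l :
    curve_point d 0 (rshift 1 l) = d.2 ^+ l.+2 + psi d.1 0 l.
  by rewrite [LHS]mxE row_mxEr mxE.
move=> [w s] [w' s'] /rowP eq_ww'.
have es : s = s'.
  have := eq_ww' (lshift n 0); rewrite !mxE !(unsplitK (inl _ _)) /= !mxE.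
  by rewrite !addr0 !expr1.
subst s'; congr pair; apply: psi_inj; apply/rowP => l.
by have := eq_ww' (rshift 1 l); rewrite !curve_point_rshift => /addrI.
Qed.

Section Slice.
Variables (b : 'rV[F]_(1 + n)) (c : F) (w : E).

Definition slice_poly : {poly F} :=
  rVpoly b * 'X + (\sum_l b 0 l * row_mx (0 : 'rV[F]_1) (psi w) 0 l - c)%:P.

Lemma root_slice_poly s :
  root slice_poly s = (\sum_l b 0 l * curve_point (w, s) 0 l == c).
Proof.
rewrite /root hornerMXaddC (horner_coef_wide _ (size_poly _ _)) big_distrl addrA.
rewrite -big_split /= subr_eq0; congr (_ == _); apply: eq_bigr => l _.
by rewrite coef_rVpoly_ord !mxE -mulrA -exprSr mulrDr.
Qed.

Lemma slice_poly_neq0 : b != 0 -> slice_poly != 0.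
Proof.
move=> b0; rewrite -size_poly_gt0 /slice_poly size_MXaddC.
suff /negbTE -> : rVpoly b != 0 by [].
by apply: contraNneq b0 => b0; rewrite -[b]rVpolyK b0 linear0.
Qed.

Lemma size_slice_poly : (size slice_poly <= n.+2)%N.
Proof. by rewrite size_MXaddC; case: ifP => // _; rewrite ltnS size_poly. Qed.
End Slice.

Lemma card_curve_hyperplane (b : 'rV[F]_(1 + n)) (c : F) : b != 0 ->
  (#|[pred d | (\sum_l b 0 l * curve_point d 0 l == c)%R]| <= #|E| * n.+1)%N.
Proof.
move=> b0; apply: card_prod_le_fibers => w.
rewrite -ltnS (leq_trans _ (size_slice_poly b c w)) //.
apply: leq_ltn_trans (card_root_lt_size (slice_poly_neq0 c w b0)).
by apply: subset_leq_card; apply/subsetP => s; rewrite !inE root_slice_poly.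
Qed.
End MomentCurve.

Section GraphSpace.
Local Open Scope ring_scope.
Variables (F : fieldType) (k m : nat).
Implicit Types A B : 'M[F]_(k, m).

Definition graph_basis A : k.-tuple 'rV[F]_(k + m) :=
  [tuple row i (row_mx 1%:M A) | i < k].

Definition graph_space A : {vspace 'rV[F]_(k + m)} := <<graph_basis A>>%VS.

Lemma graph_basisE A i : tnth (graph_basis A) i = row_mx 'e_i (row i A).
Proof. by rewrite tnth_mktuple row_row_mx row1. Qed.

Lemma graph_basis_comb A (c : 'I_k -> F) :
  \sum_i c i *: (graph_basis A)`_i = row_mx (\row_i c i) (\row_i c i *m A).
Proof.
rewrite -[X in row_mx X _]mulmx1 -mul_mx_row mulmx_sum_row.
by apply: eq_bigr => i _; rewrite -tnth_nth tnth_mktuple mxE.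
Qed.

Lemma mem_graph_space A v : v \in graph_space A -> rsubmx v = lsubmx v *m A.
Proof.
move/coord_span; rewrite graph_basis_comb => ->.
by rewrite row_mxKl row_mxKr.
Qed.

Lemma graph_basis_free A : free (graph_basis A).
Proof.
apply/freeP => c; rewrite graph_basis_comb => /(congr1 lsubmx).
by rewrite row_mxKl linear0 => /rowP c0 i; have := c0 i; rewrite !mxE.
Qed.

Lemma dim_graph_space A : \dim (graph_space A) = k.
Proof. by have /eqP := graph_basis_free A; rewrite size_tuple. Qed.

Lemma graph_space_inj : injective graph_space.
Proof.
move=> A B eqAB; apply/row_matrixP => i.
have : tnth (graph_basis B) i \in graph_space A by rewrite eqAB memv_span ?mem_tnth.
by move/mem_graph_space; rewrite graph_basisE row_mxKl row_mxKr -rowE.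
Qed.
End GraphSpace.

Section Perpendicular.
Local Open Scope ring_scope.
Variable p : nat.
Local Notation F := 'F_p.

Lemma dotv_sumr n (I : finType) (c : I -> F) (X : I -> 'rV[F]_n) x :
  dotv x (\sum_i c i *: X i) = \sum_i c i * dotv x (X i).
Proof.
rewrite /dotv; under eq_bigr do rewrite summxE big_distrr.
rewrite exchange_big; apply: eq_bigr => i _; rewrite big_distrr.
by apply: eq_bigr => l _; rewrite !mxE; apply: mulrCA.
Qed.

Lemma inPer_span n d (X : d.-tuple 'rV[F]_n) x :
  inPer <<X>>%VS x = [forall i, dotv x (tnth X i) == 0].
Proof.
apply/forallP/forallP => [perX i | perX w].
  by have /implyP := perX (tnth X i); apply; rewrite memv_span ?mem_tnth.
apply/implyP => /coord_span ->; rewrite dotv_sumr big1 // => i _.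
by rewrite -tnth_nth (eqP (perX i)) mulr0.
Qed.

Lemma dotv_row_mx k m (x : 'rV[F]_(k + m)) u v :
  dotv x (row_mx u v) = dotv (lsubmx x) u + dotv (rsubmx x) v.
Proof.
rewrite /dotv big_split_ord.
by congr (_ + _); apply: eq_bigr => i _; rewrite (row_mxEl, row_mxEr) mxE.
Qed.

Lemma dotv_delta n (x : 'rV[F]_n) i : dotv x 'e_i = x 0 i.
Proof.
rewrite /dotv (bigD1 i) //= mxE !eqxx mulr1 big1 ?addr0 // => j ji.
by rewrite mxE (negbTE ji) andbF mulr0.
Qed.

Lemma inPer_graph_space k m (A : 'M[F]_(k, m)) xi :
  inPer (graph_space A) xi =
  [forall i, lsubmx xi 0 i + dotv (rsubmx xi) (row i A) == 0].
Proof.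
rewrite inPer_span; apply: eq_forallb => i.
by rewrite graph_basisE dotv_row_mx dotv_delta.
Qed.

Lemma graph_space_notin_Per k m (A : 'M[F]_(k, m)) xi :
  xi != 0 -> rsubmx xi = 0 -> ~~ inPer (graph_space A) xi.
Proof.
move=> xi0 r0; apply: contra xi0; rewrite inPer_graph_space => /forallP perA.
suff l0 : lsubmx xi = 0 by rewrite -[xi]hsubmxK l0 r0 row_mx0.
apply/rowP => i; have /eqP := perA i.
by rewrite r0 /dotv big1 ?addr0 ?mxE // => l _; rewrite mxE mul0r.
Qed.
End Perpendicular.

Section GraphFamily.
Local Open Scope ring_scope.
Variables (p k m : nat) (D : finType) (phi : D -> 'rV['F_p]_m) (L : nat).
Hypothesis phi_inj : injective phi.
Hypothesis card_hyperplane_le :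
  forall b c, b != 0 -> (#|[pred d | dotv b (phi d) == c]| <= L)%N.

Definition graph_family : seq {vspace 'rV['F_p]_(k + m)} :=
  [seq graph_space (\matrix_i phi (f i))
    | f : {ffun 'I_k -> D} <- enum {ffun 'I_k -> D}].

Lemma graph_family_Grass : subset_Grass k graph_family.
Proof.
split; last by apply/allP => _ /mapP [f _ ->]; rewrite dim_graph_space.
rewrite map_inj_uniq ?enum_uniq // => f g /graph_space_inj /row_matrixP eq_fg.
by apply/ffunP => i; apply: phi_inj; have := eq_fg i; rewrite !rowK.
Qed.

Lemma size_graph_family : size graph_family = (#|D| ^ k)%N.
Proof. by rewrite size_map -cardT card_ffun card_ord. Qed.

Lemma count_Per_graph_family xi : xi != 0 -> (count_Per graph_family xi <= L ^ k)%N.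
Proof.
move=> xi0; rewrite /count_Per count_map.
have -> : forall P : pred {ffun 'I_k -> D}, count P (enum {ffun 'I_k -> D}) = #|P|.
  by move=> P; rewrite enumT cardE /enum_mem size_filter.
have [r0 | r_neq0] := eqVneq (rsubmx xi) 0.
  by rewrite eq_card0 // => f; rewrite !inE (negbTE (graph_space_notin_Per _ xi0 r0)).
pose hyperplane_section i := [pred d | dotv (rsubmx xi) (phi d) == - lsubmx xi 0 i].
rewrite (eq_card (B := family hyperplane_section)).
  rewrite card_family foldrE big_map big_enum /=.
  rewrite -[k in (_ <= _ ^ k)%N]card_ord -prod_nat_const.
  by apply: leq_prod => i _; apply: card_hyperplane_le.
move=> f; rewrite !inE inPer_graph_space; apply/forallP/familyP => perf i;
  by have := perf i; rewrite !inE rowK addrC addr_eq0.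
Qed.
End GraphFamily.

Lemma exists_graph_family (p k m j N : nat) :
  prime p -> (0 < j)%N -> (j < m)%N -> (N <= p)%N ->
  exists G : seq {vspace 'rV['F_p]_(k + m)},
    [/\ subset_Grass k G, size G = ((p ^ j * N) ^ k)%N &
      forall xi, xi != 0%R -> (count_Per G xi * p ^ k <= m ^ k * size G)%N].
Proof.
move=> p_pr j_gt0 j_lt_m N_le_p; case: m j_lt_m => // m j_le_m.
pose M := (p ^ j.-1 * N)%N.
have M_le : (M <= #|{: 'rV['F_p]_m}|)%N.
  rewrite card_mx card_Fp // mul1n /M (leq_trans (leq_mul (leqnn _) N_le_p)) //.
  by rewrite -expnSr prednK // leq_exp2l ?prime_gt1.
pose psi (i : 'I_M) := enum_val (widen_ord M_le i).
have psi_inj : injective psi by move=> i i' /enum_val_inj [] /val_inj.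
have size_D : #|{: 'I_M * 'F_p}| = (M * p)%N by rewrite card_prod card_ord card_Fp.
have -> : (p ^ j * N = M * p)%N by rewrite mulnAC -expnSr prednK.
exists (graph_family k (curve_point psi)); split.
- exact: graph_family_Grass (curve_point_inj psi_inj).
- by rewrite size_graph_family size_D.
move=> xi xi0; rewrite size_graph_family size_D expnMn mulnA -expnMn.
rewrite leq_mul // mulnC; apply: count_Per_graph_family xi0 => b c b0.
by have := card_curve_hyperplane psi c b0; rewrite card_ord.
Qed.

From Stdlib Require Import Reals Lra Lia.

Section RealBounds.
Local Open Scope R_scope.

Lemma INR_muln (a b : nat) : INR (muln a b) = INR a * INR b.
Proof. exact: mult_INR. Qed.

Lemma INR_expn (a k : nat) : INR (expn a k) = INR a ^ k.
Proof. by elim: k => [|k IHk]; rewrite ?expnS ?INR_muln ?IHk. Qed.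

Lemma nat_floor (x : R) : 0 <= x -> exists N : nat, INR N <= x < INR N + 1.
Proof.
move=> x_ge0; have floor_ge0 : (0 <= Zfloor x)%Z by apply: Zfloor_lub.
exists (Z.to_nat (Zfloor x)).
by rewrite INR_IZR_INZ Znat.Z2Nat.id //; apply: Zfloor_bound.
Qed.

Lemma exponent_decomposition (k m : nat) (alpha : R) : INR k < alpha < INR m * INR k ->
  exists j gamma,
    [/\ (0 < j)%nat, (j < m)%nat, 0 <= gamma < 1 & alpha = INR k * (INR j + gamma)].
Proof.
move=> [k_lt_alpha alpha_lt_mk].
have k_gt0 : 0 < INR k by have := pos_INR k; have := pos_INR m; nra.
set beta := alpha / INR k.
have alphaE : alpha = INR k * beta by rewrite /beta; field; lra.
rewrite alphaE in k_lt_alpha alpha_lt_mk.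
have [j [j_le_beta beta_lt_j1]] : exists j, INR j <= beta < INR j + 1 by apply: nat_floor; nra.
exists j, (beta - INR j); split; last (by rewrite alphaE; ring); last lra.
  by apply/ltP/INR_lt; simpl; nra.
by apply/ltP/INR_lt; nra.
Qed.

Lemma nat_floor_Rpower (p : nat) (gamma : R) : 1 < INR p -> 0 <= gamma < 1 ->
  exists N : nat, (N <= p)%nat /\ INR N <= Rpower (INR p) gamma <= 2 * INR N.
Proof.
move=> p_gt1 gamma01; set x := Rpower (INR p) gamma.
have x_ge1 : 1 <= x by rewrite -(Rpower_O (INR p)); [apply: Rle_Rpower|]; lra.
have x_lt_p : x < INR p by rewrite -[X in _ < X]Rpower_1; [apply: Rpower_lt|]; lra.
have [N [N_le_x x_lt_N1]] := nat_floor (Rle_trans _ _ _ Rle_0_1 x_ge1).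
have N_gt0 : (0 < N)%nat by apply/ltP/INR_lt; simpl; lra.
have N_ge1 : 1 <= INR N by apply: (le_INR 1); apply/leP.
exists N; split; last by split; lra.
by apply/leP/INR_le; lra.
Qed.

Lemma Rpower_mul_nat_add (x g : R) (k j : nat) : 0 < x ->
  Rpower x (INR k * (INR j + g)) = (x ^ j * Rpower x g) ^ k.
Proof.
move=> x_gt0; rewrite Rmult_comm -Rpower_mult Rpower_pow; last exact: exp_pos.
by rewrite Rpower_plus Rpower_pow.
Qed.

Lemma pow_sandwich (a y x : R) (k : nat) : 0 <= a -> 0 <= y -> y <= x <= 2 * y ->
  (a * y) ^ k <= (a * x) ^ k <= 2 ^ k * (a * y) ^ k.
Proof.
by move=> a_ge0 y_ge0 y_x; rewrite -Rpow_mult_distr; split; apply: pow_incr; nra.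
Qed.

Lemma INR_le_Rpower_opp (c S p M k : nat) (C : R) : (0 < p)%nat ->
  (c * expn p k <= M * S)%nat -> INR M <= C ->
  INR c <= C * INR S * Rpower (INR p) (- INR k).
Proof.
move=> p_gt0 /leP/le_INR; rewrite !INR_muln INR_expn => cS_le M_le_C.
have p_k_gt0 : 0 < INR p ^ k by apply/pow_lt/lt_0_INR/ltP.
rewrite Rpower_Ropp Rpower_pow; last exact/lt_0_INR/ltP.
apply: (Rmult_le_reg_r (INR p ^ k)) => //.
rewrite Rmult_assoc Rinv_l ?Rmult_1_r; last lra.
by have := pos_INR S; nra.
Qed.
End RealBounds.

Theorem corollary3p4 (n m : nat) (alpha : R) :
  (2 <= n)%N -> (1 <= m)%N -> (m <= n - 1)%N ->
  (INR (n - m) < alpha)%R -> (alpha < INR (m * (n - m)))%R ->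
  exists C : R, (0 < C)%R /\
    forall p : nat, prime p ->
      exists G : seq {vspace 'rV['F_p]_n},
        subset_Grass (n - m) G /\
        (Rpower (INR p) alpha <= C * INR (size G))%R /\
        (INR (size G) <= C * Rpower (INR p) alpha)%R /\
        forall xi : 'rV['F_p]_n, xi != @GRing.zero _ ->
          (INR (count_Per G xi) <= C * INR (size G) * Rpower (INR p) (- INR (n - m)))%R.
Proof.
move=> _ m_gt0 m_lt_n.
have [k -> k_gt0] : exists2 k, n = (k + m)%N & (0 < k)%N by exists (n - m)%N; lia.
rewrite addnK INR_muln => k_lt_alpha alpha_lt_mk.
have [j [gamma [j_gt0 j_lt_m gamma01 alphaE]]] :=
  exponent_decomposition (conj k_lt_alpha alpha_lt_mk).
have m_ge1 : (1 <= INR m)%R by apply: (le_INR 1); apply/leP.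
have C_ge : (1 <= 2 ^ k <= (2 * INR m) ^ k /\ INR m ^ k <= (2 * INR m) ^ k)%R.
  by split; [split; [apply: pow_R1_Rle | apply: pow_incr] | apply: pow_incr]; lra.
exists ((2 * INR m) ^ k)%R; split; first lra.
move=> p p_pr; have p_gt1 : (1 < INR p)%R by apply/(lt_INR 1)/ltP/prime_gt1.
have [N [N_le_p N_x]] := nat_floor_Rpower p_gt1 gamma01.
have [G [G_Grass G_size G_count]] := exists_graph_family k p_pr j_gt0 j_lt_m N_le_p.
exists G; split => //.
have sizeE : (INR (size G) = (INR p ^ j * INR N) ^ k)%R.
  by rewrite G_size INR_expn INR_muln INR_expn.
have powE : (Rpower (INR p) alpha = (INR p ^ j * Rpower (INR p) gamma) ^ k)%R.
  by rewrite alphaE Rpower_mul_nat_add //; lra.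
have p_j_ge0 : (0 <= INR p ^ j)%R by apply: pow_le; lra.
have := pow_sandwich k p_j_ge0 (pos_INR N) N_x; rewrite -sizeE -powE.
have := pos_INR (size G); split; [nra | split; [nra |]].
move=> xi xi0; apply: INR_le_Rpower_opp (G_count xi xi0) _; first exact: prime_gt0.
by rewrite INR_expn; lra.
Qed.
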